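(* There exist time-inconsistent planning models $(G,w,s,t,\beta)$ in which the number of pairwise distinct costs of feasible $s$-$t$ paths is exponential in the number $n$ of vertices of $G$. (In particular, the difference between the largest and smallest cost of a feasible $s$-$t$ path can be exponential in $n$.)
   Context: A time-inconsistent planning model is a tuple $(G,w,s,t,\beta)$ where $G$ is a finite directed acyclic graph with $n$ vertices, $w:E(G)\to\mathbb{N}$ assigns a cost to each arc, $s,t\in V(G)$ are the start and target vertices, and $\beta\le 1$ is the present-bias parameter. For a vertex $v$ and a $v$-$t$ path $P$ with arcs $e_1,\dots,e_m$ (in order), the perceived cost of $P$ is $\zeta(P)=w(e_1)+\beta\sum_{i=2}^m w(e_i)$, and $\zeta(v)=\min\{\zeta(P): P \text{ a } v\text{-}t \text{ path}\}$. A $v$-$t$ path of perceived cost $\zeta(v)$ is called a perceived path. The agent starts at $s$; at a vertex $v\neq t$ it chooses some perceived $v$-$t$ path and traverses its first arc, and repeats until reaching $t$. An $s$-$t$ path $v_0=s,v_1,\dots,v_m=t$ is feasible if for every $i<m$ the arc $v_iv_{i+1}$ is the first arc of some perceived $v_i$-$t$ path, i.e., the agent may follow it under some way of breaking ties. The (actual) cost of a path is the sum of $w$ over its arcs. *)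

From HB Require Import structures.
From mathcomp Require Import all_boot all_order all_algebra.
From mathcomp Require Import reals.
Set Implicit Arguments. Unset Strict Implicit. Unset Printing Implicit Defensive.
Import Order.TTheory GRing.Theory Num.Theory.
Local Open Scope ring_scope.

(* A planning graph: vertex set 'I_n, arc relation e : rel 'I_n,
   arc costs w : 'I_n -> 'I_n -> nat (only meaningful on arcs).
   A walk from v is a sequence p of vertices with (path e v p); it visits
   v, p_1, ..., p_k and ends at (last v p). *)

Definition acyclic (n : nat) (e : rel 'I_n) : Prop :=
  forall (v : 'I_n) (p : seq 'I_n), path e v p -> last v p = v -> p = [::].

Definition vt_path (n : nat) (e : rel 'I_n) (v t : 'I_n) (p : seq 'I_n) : Prop :=
  path e v p /\ last v p = t.

Definition cost (n : nat) (w : 'I_n -> 'I_n -> nat) (v : 'I_n) (p : seq 'I_n) : nat :=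
  sumn (pairmap w v p).

Definition perceived_cost (R : realType) (n : nat) (w : 'I_n -> 'I_n -> nat)
  (beta : R) (v : 'I_n) (p : seq 'I_n) : R :=
  match p with
  | [::] => 0
  | x :: q => (w v x)%:R + beta * (cost w x q)%:R
  end.

Definition perceived_path (R : realType) (n : nat) (e : rel 'I_n)
  (w : 'I_n -> 'I_n -> nat) (beta : R) (t v : 'I_n) (p : seq 'I_n) : Prop :=
  vt_path e v t p /\
  forall q, vt_path e v t q -> perceived_cost w beta v p <= perceived_cost w beta v q.

(* p (from s) is a feasible s-t path: each arc v_i v_{i+1} is the first arc of
   some perceived v_i-t path. *)
Definition feasible (R : realType) (n : nat) (e : rel 'I_n)
  (w : 'I_n -> 'I_n -> nat) (beta : R) (s t : 'I_n) (p : seq 'I_n) : Prop :=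
  vt_path e s t p /\
  forall i, (i < size p)%N ->
    exists q, perceived_path e w beta t (nth s (s :: p) i) (nth s p i :: q).

From HB Require Import structures.
From mathcomp Require Import all_boot all_order all_algebra.
From mathcomp Require Import reals.
From mathcomp Require Import zify lra.
Import Order.TTheory GRing.Theory Num.Theory.
Set Implicit Arguments. Unset Strict Implicit.

(* The model is a ladder with hubs 0, 2, ..., 2m (s = 0, t = 2m): from hub 2i
   the agent either takes the rung 2i -> 2i+2 of cost 2^i, or the free arc
   2i -> 2i+1 followed by 2i+1 -> 2i+2 of cost 2^(i+1).  With beta = 1/2 both
   choices look equally cheap at every hub, because the shortest distance
   D(2i) = 2^m - 2^i to the target satisfies 2^i + D(2i+2)/2 = D(2i+1)/2 = 2^(m-1).
   Hence every s-t path is feasible, and the detours chosen by the agent add an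
   arbitrary sum of distinct powers 2^i, i < m, to the cost 2^m - 1 of the
   direct path: all 2^m values 2^m - 1 + k, k < 2^m, are attained. *)

Lemma cost_cons n (w : 'I_n -> 'I_n -> nat) u x q :
  cost w u (x :: q) = w u x + cost w x q.
Proof. by []. Qed.

Lemma acyclic_of_ltn n (e : rel 'I_n) : (forall u v, e u v -> u < v) -> acyclic e.
Proof.
move=> e_lt; have lt_last v p : path e v p -> p != [::] -> v < last v p.
  elim: p v => //= x [|y p] IHp v /andP [/e_lt v_lt_x x_p] _ //.
  exact: ltn_trans v_lt_x (IHp x x_p isT).
move=> v [//|x p] /lt_last /(_ isT) v_lt v_last.
by rewrite v_last ltnn in v_lt.
Qed.

Lemma feasible_of_perceived_arcs (R : realType) n (e : rel 'I_n) w (beta : R) s t p :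
  (forall u x, e u x -> exists q, perceived_path e w beta t u (x :: q)) ->
  vt_path e s t p -> feasible e w beta s t p.
Proof.
move=> perceived_arc [s_p p_t]; split=> // i lt_i_p.
by apply: perceived_arc; apply: (pathP s s_p).
Qed.

Section Potential.

Variables (n : nat) (e : rel 'I_n) (w : 'I_n -> 'I_n -> nat) (t : 'I_n).
Variable D : 'I_n -> nat.
Hypothesis D_t : D t = 0.
Hypothesis D_arc : forall u v, e u v -> D u <= w u v + D v.

Lemma potential_le_cost u p : vt_path e u t p -> D u <= cost w u p.
Proof.
elim: p u => [|x p IHp] u [/= u_p p_t]; first by rewrite p_t D_t.
move: u_p => /andP [u_x x_p]; rewrite cost_cons.
by apply: leq_trans (D_arc u_x) _; rewrite leq_add2l IHp.
Qed.

Lemma tight_path :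
  (forall u v, e u v -> u < v) ->
  (forall u, u != t -> exists2 x, e u x & D u = w u x + D x) ->
  forall u, exists2 q, vt_path e u t q & cost w u q = D u.
Proof.
move=> e_lt tight u; move: {2}(n - u) (leqnn (n - u)) => k.
elim: k u => [|k IHk] u le_n_u.
  by have := ltn_ord u; lia.
have [-> | u_neq_t] := eqVneq u t; first by exists [::].
have [x u_x Du] := tight u u_neq_t.
have [|q [x_q q_t] Dx] := IHk x; first by have := e_lt _ _ u_x; lia.
by exists (x :: q); [split=> //=; rewrite u_x | rewrite cost_cons Dx].
Qed.

Lemma perceived_path_of_potential (R : realType) (beta : R) u x q :
  acyclic e -> (0 <= beta)%R ->
  e u x -> vt_path e x t q -> cost w x q = D x ->
  (forall y, e u y ->
     ((w u x)%:R + beta * (D x)%:R <= (w u y)%:R + beta * (D y)%:R)%R) ->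
  perceived_path e w beta t u (x :: q).
Proof.
move=> acyc beta_ge0 u_x [x_q q_t] Dx x_best.
have u_xq : vt_path e u t (x :: q) by split=> //=; rewrite u_x.
split=> // -[|y r] [/= u_yr yr_t].
  by case: u_xq => /acyc xq_nil xq_t; have := xq_nil (etrans xq_t (esym yr_t)).
move: u_yr => /andP [u_y y_r].
have Dy : (D y <= cost w y r)%N by apply: potential_le_cost.
rewrite /perceived_cost Dx; apply: le_trans (x_best y u_y) _.
by rewrite lerD2l ler_wpM2l // ler_nat.
Qed.

End Potential.

Variant parity_spec : nat -> Type :=
  | ParityEven i : parity_spec i.*2
  | ParityOdd i : parity_spec i.*2.+1.

Lemma parityP u : parity_spec u.
Proof.
rewrite -[u]odd_double_half; case: (odd u); rewrite ?add1n ?add0n.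
- exact: ParityOdd.
- exact: ParityEven.
Qed.

Definition ladder_arc (u v : nat) : bool :=
  (v == u.+1) || (~~ odd u && (v == u.+2)).

Definition ladder_weight (u v : nat) : nat :=
  if odd u then 2 ^ (u./2).+1 else if v == u.+2 then 2 ^ u./2 else 0.

Definition ladder_dist (m u : nat) : nat :=
  if odd u then 2 ^ m else 2 ^ m - 2 ^ u./2.

Lemma ladder_arc_even i v : ladder_arc i.*2 v = (v == i.*2.+1) || (v == i.*2.+2).
Proof. by rewrite /ladder_arc odd_double. Qed.

Lemma ladder_arc_odd i v : ladder_arc i.*2.+1 v = (v == i.*2.+2).
Proof. by rewrite /ladder_arc /= odd_double orbF. Qed.

Lemma ladder_weight_detour i : ladder_weight i.*2 i.*2.+1 = 0.
Proof. by rewrite /ladder_weight odd_double (ltn_eqF (ltnSn _)). Qed.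

Lemma ladder_weight_rung i : ladder_weight i.*2 i.+1.*2 = 2 ^ i.
Proof. by rewrite /ladder_weight odd_double doubleK doubleS eqxx. Qed.

Lemma ladder_weight_odd i v : ladder_weight i.*2.+1 v = 2 ^ i.+1.
Proof. by rewrite /ladder_weight /= odd_double uphalf_double. Qed.

Lemma ladder_dist_even m i : ladder_dist m i.*2 = 2 ^ m - 2 ^ i.
Proof. by rewrite /ladder_dist odd_double doubleK. Qed.

Lemma ladder_dist_odd m i : ladder_dist m i.*2.+1 = 2 ^ m.
Proof. by rewrite /ladder_dist /= odd_double. Qed.

Definition ladderE := (ladder_arc_even, ladder_arc_odd, ladder_weight_detour,
  ladder_weight_rung, ladder_weight_odd, ladder_dist_even, ladder_dist_odd).

Lemma leq_pow2S i m : i < m -> 2 * 2 ^ i <= 2 ^ m.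
Proof. by move=> lt_i_m; rewrite -expnS leq_pexp2l. Qed.

Lemma ladder_arc_lt u v : ladder_arc u v -> u < v.
Proof. by case/orP => [/eqP -> | /andP [_ /eqP ->]]. Qed.

Lemma ladder_dist_potential m u v :
  ladder_arc u v -> v <= m.*2 -> ladder_dist m u <= ladder_weight u v + ladder_dist m v.
Proof.
case: (parityP u) => i; rewrite ladderE.
- case/orP => /eqP -> le_v; rewrite -?doubleS !ladderE; first lia.
  by rewrite expnS; have := @leq_pow2S i m; lia.
- by move=> /eqP -> le_v; rewrite -doubleS !ladderE expnS; have := @leq_pow2S i m; lia.
Qed.

Lemma ladder_dist_tight m u : u < m.*2 ->
  exists2 v, ladder_arc u v /\ v <= m.*2
           & ladder_dist m u = ladder_weight u v + ladder_dist m v.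
Proof.
case: (parityP u) => i lt_u; have le_pow := @leq_pow2S i m ltac:(lia).
- exists i.+1.*2; first by rewrite doubleS ladderE eqxx orbT; split=> //; lia.
  by rewrite !ladderE expnS; lia.
- exists i.+1.*2; first by rewrite doubleS ladderE eqxx; split=> //; lia.
  by rewrite !ladderE expnS; lia.
Qed.

(* With beta = 1/2 this makes all out-arcs of a vertex equally attractive. *)
Lemma ladder_balanced m u x y : ladder_arc u x -> ladder_arc u y ->
  x <= m.*2 -> y <= m.*2 ->
  2 * ladder_weight u x + ladder_dist m x = 2 * ladder_weight u y + ladder_dist m y.
Proof.
suff arc_value v : ladder_arc u v -> v <= m.*2 ->
    2 * ladder_weight u v + ladder_dist m v =
    2 * ladder_weight u u.+1 + ladder_dist m u.+1.
  by move=> u_x u_y le_x le_y; rewrite !arc_value.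
case: (parityP u) => i; rewrite ladderE; last by move=> /eqP ->.
case/orP => /eqP -> le_v //.
by rewrite -doubleS !ladderE expnS; have := @leq_pow2S i m; lia.
Qed.

Definition ladder_rel (m : nat) : rel 'I_m.*2.+1 := fun u v => ladder_arc u v.

Definition ladder_w (m : nat) (u v : 'I_m.*2.+1) : nat := ladder_weight u v.

Arguments ladder_rel : clear implicits.
Arguments ladder_w : clear implicits.

Definition hub (m i : nat) : 'I_m.*2.+1 := inord i.*2.

Lemma hubE m i : i <= m -> hub m i = i.*2 :> nat.
Proof. by move=> le_i_m; rewrite inordK // ltnS leq_double. Qed.

Lemma ladder_acyclic m : acyclic (ladder_rel m).
Proof. by apply: acyclic_of_ltn => u v /ladder_arc_lt. Qed.

Lemma ladder_dist_max m : ladder_dist m (@ord_max m.*2) = 0.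
Proof. by rewrite /= ladder_dist_even subnn. Qed.

Lemma ladder_dist_potential_ord m (u v : 'I_m.*2.+1) :
  ladder_rel m u v -> ladder_dist m u <= ladder_w m u v + ladder_dist m v.
Proof. by move/ladder_dist_potential; apply; rewrite -ltnS. Qed.

Lemma ladder_shortest_path m (u : 'I_m.*2.+1) :
  exists2 q, vt_path (ladder_rel m) u ord_max q
           & cost (ladder_w m) u q = ladder_dist m u.
Proof.
apply: (tight_path (D := fun v => ladder_dist m v) (ladder_dist_max m)).
  by move=> v x /ladder_arc_lt.
move=> v v_neq_max; have lt_v : v < m.*2.
  rewrite ltn_neqAle -ltnS ltn_ord andbT.
  by apply: contra v_neq_max => /eqP v_max; apply/eqP/val_inj.
have [x [v_x le_x] Dv] := ladder_dist_tight lt_v.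
have xE : (inord x : 'I_m.*2.+1) = x :> nat by rewrite inordK.
by exists (inord x); rewrite /ladder_rel /ladder_w xE.
Qed.

Lemma ladder_perceived (R : realType) m (u x : 'I_m.*2.+1) : ladder_rel m u x ->
  exists q, perceived_path (ladder_rel m) (ladder_w m) (2^-1 : R) ord_max u (x :: q).
Proof.
move=> u_x; have [q x_q Dx] := ladder_shortest_path x; exists q.
apply: (@perceived_path_of_potential _ _ _ _ (fun v => ladder_dist m v)
  (ladder_dist_max m) (@ladder_dist_potential_ord m) _ _ _ _ _ _ _ u_x x_q Dx).
- exact: ladder_acyclic.
- by rewrite invr_ge0 ler0n.
move=> y u_y; have := ladder_balanced u_x u_y (ltn_ord x) (ltn_ord y).
move=> /(congr1 (fun k : nat => (k%:R : R)%R)); rewrite !natrD => balanced.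
by rewrite /ladder_w; lra.
Qed.

(* The parity of k decides whether the first segment is crossed by the rung
   or by the detour. *)
Lemma ladder_path_costs m i k : i <= m -> k < 2 ^ (m - i) ->
  exists2 p, vt_path (ladder_rel m) (hub m i) ord_max p
           & cost (ladder_w m) (hub m i) p = ladder_dist m i.*2 + k * 2 ^ i.
Proof.
move=> le_i; move mi: (m - i) => j; elim: j i k mi le_i => [|j IHj] i k mi le_i lt_k.
  have {mi le_i} -> : i = m by lia.
  have -> : k = 0 by move: lt_k; rewrite expn0; lia.
  have -> : hub m m = ord_max by apply: val_inj; rewrite /= hubE.
  by exists [::]; rewrite // /cost /= ladder_dist_even subnn.
have lt_half : k./2 < 2 ^ j by rewrite ltn_half_double -mul2n -expnS.
have [p hub_p cost_p] := IHj i.+1 k./2 ltac:(lia) ltac:(lia) lt_half.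
have hubi : hub m i = i.*2 :> nat by rewrite hubE.
have hubSi : hub m i.+1 = i.+1.*2 :> nat by rewrite hubE; lia.
have le_pow := @leq_pow2S i m ltac:(lia).
rewrite -[k]odd_double_half; case: (odd k) => /=.
- set d : 'I_m.*2.+1 := inord i.*2.+1.
  have dE : d = i.*2.+1 :> nat by rewrite inordK //; lia.
  exists (d :: hub m i.+1 :: p); first case: hub_p => path_p p_t.
  + split=> //=; rewrite /ladder_rel path_p hubi dE hubSi.
    by rewrite ladder_arc_even ladder_arc_odd doubleS !eqxx.
  + by rewrite !cost_cons cost_p /ladder_w hubi dE hubSi !ladderE expnS; lia.
- exists (hub m i.+1 :: p); first case: hub_p => path_p p_t.
  + split=> //=; rewrite /ladder_rel path_p hubi hubSi.
    by rewrite ladder_arc_even doubleS eqxx orbT.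
  + by rewrite cost_cons cost_p /ladder_w hubi hubSi !ladderE expnS; lia.
Qed.

Theorem theorem1 (R : realType) :
  exists a b : nat, forall m : nat,
    exists (n : nat) (e : rel 'I_n) (w : 'I_n -> 'I_n -> nat) (s t : 'I_n) (beta : R),
      acyclic e /\ (0 < beta /\ beta <= 1)%R /\ (n <= a * m + b)%N /\
      exists cs : seq nat,
        uniq cs /\ size cs = (2 ^ m)%N /\
        forall c, c \in cs ->
          exists p : seq 'I_n, feasible e w beta s t p /\ cost w s p = c.
Proof.
exists 2, 1 => m.
exists m.*2.+1, (ladder_rel m), (ladder_w m), (hub m 0), ord_max, (2^-1)%R.
split; first exact: ladder_acyclic.
split; first by split; lra.
split; first lia.
exists [seq 2 ^ m - 1 + k | k <- iota 0 (2 ^ m)].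
split; first by rewrite map_inj_uniq ?iota_uniq // => k1 k2 /addnI.
split; first by rewrite size_map size_iota.
move=> c /mapP [k]; rewrite mem_iota => /andP [_ lt_k] ->.
have [p s_p cost_p] := @ladder_path_costs m 0 k (leq0n m) ltac:(by rewrite subn0).
exists p; split; first exact: feasible_of_perceived_arcs (@ladder_perceived R m) s_p.
by rewrite cost_p ladder_dist_even expn0 muln1.
Qed.
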